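(* Let $n$ be a positive integer. Then $\mathsf{NAADT}(\mathsf{OMB}_n) = n$ and $\mathsf{D}_{\mathrm{cc}}^\rightarrow(\mathsf{OMB}_n \circ \mathsf{AND}) = \lceil\log(n + 1)\rceil$.
   Context: $\mathsf{OMB}_n:\{0,1\}^n\to\{0,1\}$ is defined by $\mathsf{OMB}_n(x)=1$ if $\max\{i\in[n]:x_i=0\}$ is odd and $0$ otherwise, with $\mathsf{OMB}_n(1^n)=0$. $\mathsf{AND}_S(x)=\prod_{i\in S}x_i$. $\mathsf{NAADT}(f)$ is the minimum $k$ for which there exist $S_1,\dots,S_k\subseteq[n]$ such that $f(x)$ is determined by $\mathsf{AND}_{S_1}(x),\dots,\mathsf{AND}_{S_k}(x)$ for all $x$. $f\circ\mathsf{AND}$ is the two-party function $(x,y)\mapsto f(x_1\wedge y_1,\dots,x_n\wedge y_n)$ (Alice holds $x$, Bob $y$); $\mathsf{D}_{\mathrm{cc}}^\rightarrow$ is deterministic one-way communication complexity. Logarithms are base 2. *)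

From mathcomp Require Import all_boot.
Set Implicit Arguments. Unset Strict Implicit. Unset Printing Implicit Defensive.

(* Inputs x in {0,1}^n are finite functions 'I_n -> bool; the 0-based index
   i : 'I_n stands for the paper's index i+1 in [n]. *)
Definition bits (n : nat) := {ffun 'I_n -> bool}.

(* OMB_n(x) = 1 iff max{ i in [n] : x_i = 0 } is odd; OMB_n(1^n) = 0.
   The paper's index of coordinate i : 'I_n is i.+1; if no coordinate is 0
   the max below is 0 (even), giving OMB_n(1^n) = 0. *)
Definition OMB (n : nat) (x : bits n) : bool :=
  odd (\max_(i : 'I_n | ~~ x i) i.+1).

Definition ANDS (n : nat) (S : {set 'I_n}) (x : bits n) : bool :=
  [forall i in S, x i].

Definition naadt_ok (n : nat) (f : bits n -> bool) (k : nat) : bool :=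
  [exists S : {ffun 'I_k -> {set 'I_n}},
     [forall x : bits n, forall y : bits n,
        [forall j : 'I_k, ANDS (S j) x == ANDS (S j) y] ==> (f x == f y)]].

Lemma naadt_ok_ex (n : nat) (f : bits n -> bool) : exists k, naadt_ok f k.
Proof.
exists n; apply/existsP; exists [ffun i => [set i]].
apply/forallP => x; apply/forallP => y; apply/implyP => /forallP H.
have -> // : x = y.
apply/ffunP => i; move: (H i); rewrite ffunE /ANDS.
case Hx: (x i); case Hy: (y i) => //.
- move/eqP => E; have : [forall j in [set i], x j].
    by apply/forall_inP => j; rewrite in_set1 => /eqP ->.
  by rewrite E => /forall_inP /(_ i); rewrite in_set1 eqxx Hy => /(_ isT).
- move/eqP => E; have : [forall j in [set i], y j].
    by apply/forall_inP => j; rewrite in_set1 => /eqP ->.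
  by rewrite -E => /forall_inP /(_ i); rewrite in_set1 eqxx Hx => /(_ isT).
Qed.

Definition NAADT (n : nat) (f : bits n -> bool) : nat := ex_minn (naadt_ok_ex f).

Definition compAND (n : nat) (f : bits n -> bool) (x y : bits n) : bool :=
  f [ffun i => x i && y i].

Definition oneway_ok (X Y : finType) (F : X -> Y -> bool) (c : nat) : bool :=
  [exists a : {ffun X -> {ffun 'I_c -> bool}},
   exists b : {ffun {ffun 'I_c -> bool} -> {ffun Y -> bool}},
     [forall x, forall y, F x y == b (a x) y]].

Lemma oneway_ok_ex (X Y : finType) (F : X -> Y -> bool) : exists c, oneway_ok F c.
Proof.
exists #|X|; apply/existsP.
exists [ffun x => [ffun i : 'I_#|X| => i == enum_rank x]].
apply/existsP.
exists [ffun m : {ffun 'I_#|X| -> bool} =>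
          [ffun y => if [pick i | m i] is Some i then F (enum_val i) y else false]].
apply/forallP => x; apply/forallP => y; rewrite !ffunE.
case: pickP => [i|].
- by rewrite ffunE => /eqP ->; rewrite enum_rankK.
- by move/(_ (enum_rank x)); rewrite ffunE eqxx.
Qed.

Definition Dcc_oneway (X Y : finType) (F : X -> Y -> bool) : nat :=
  ex_minn (oneway_ok_ex F).

(* OMB_n x depends only on the position m(x) of the last zero of x, and
   m(x AND y) = max(m x, m y).  Along the chain 0^j 1^(n-j), j = 0..n, the
   value of OMB_n alternates, while each AND_S is antitone along the chain and
   so changes value at most once: n queries are needed, and the n singleton
   queries suffice.  In the one-way protocol Alice sends m(x), one of n+1
   values; conversely the n+1 rows of the chain in the communication matrix
   of OMB_n o AND are pairwise distinct, so n+1 messages are needed. *)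
From mathcomp Require Import all_boot.
Set Implicit Arguments. Unset Strict Implicit. Unset Printing Implicit Defensive.

Lemma ex_minn_eq (P : pred nat) (h : exists n, P n) m :
  P m -> (forall k, P k -> m <= k) -> ex_minn h = m.
Proof.
by case: ex_minnP => k Pk mink Pm minm; apply/eqP; rewrite eqn_leq mink ?minm.
Qed.

Lemma antitone_flip_uniq (p : nat -> bool) j1 j2 :
  (forall a b, a <= b -> p b -> p a) ->
  p j1 && ~~ p j1.+1 -> p j2 && ~~ p j2.+1 -> j1 = j2.
Proof.
move=> p_anti; wlog lt12 : j1 j2 / j1 < j2.
  move=> sym f1 f2; case: (ltngtP j1 j2) => [lt|lt|//].
    exact: sym.
  by apply/esym/sym.
by case/andP=> _ /negP nf1 /andP[/(p_anti _ _ lt12) f1 _]; case: (nf1 f1).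
Qed.

Section AndQueries.

Variable n : nat.
Implicit Types (x y : bits n) (S : {set 'I_n}).

Lemma ANDS_set1 x i : ANDS [set i] x = x i.
Proof.
by apply/forall_inP/idP => [/(_ i (set11 i)) // | xi j /set1P ->].
Qed.

Lemma ANDS_mono S x y : (forall i, x i -> y i) -> ANDS S x -> ANDS S y.
Proof. by move=> le_xy /forall_inP xS; apply/forall_inP => i /xS /le_xy. Qed.

Lemma naadt_ok_singletons (f : bits n -> bool) : naadt_ok f n.
Proof.
apply/existsP; exists [ffun i => [set i]].
apply/forallP => x; apply/forallP => y; apply/implyP => /forallP eqxy.
suff -> : x = y by [].
by apply/ffunP => i; move/eqP: (eqxy i); rewrite ffunE !ANDS_set1.
Qed.

(* Each query is antitone along the chain, so it flips at most once: assigning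
   to every flip of f a query flipping there is injective. *)
Lemma naadt_ok_chain (f : bits n -> bool) (c : nat -> bits n) m k :
  (forall j1 j2 i, j1 <= j2 -> c j2 i -> c j1 i) ->
  (forall j, j < m -> f (c j) != f (c j.+1)) ->
  naadt_ok f k -> m <= k.
Proof.
move=> c_decr f_flips /existsP[S /forallP detS].
have query_anti t a b : a <= b -> ANDS (S t) (c b) -> ANDS (S t) (c a).
  by move=> le_ab; apply: ANDS_mono => i; apply: c_decr.
have flip_query (j : 'I_m) : exists t, ANDS (S t) (c j) && ~~ ANDS (S t) (c j.+1).
  have /existsP[t neq_t] : [exists t, ANDS (S t) (c j) != ANDS (S t) (c j.+1)].
    rewrite -negb_forall; apply: contra (f_flips j (ltn_ord j)).
    exact: (implyP (forallP (detS (c j)) (c j.+1))).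
  exists t; move: neq_t (query_anti t _ _ (leqnSn j)).
  by case: (ANDS _ (c j)); case: (ANDS _ (c j.+1)) => // _ /(_ isT).
pose g j := xchoose (flip_query j).
have g_flip (j : 'I_m) : ANDS (S (g j)) (c j) && ~~ ANDS (S (g j)) (c j.+1).
  exact: xchooseP (flip_query j).
have g_inj : injective g.
  move=> j1 j2 eq_g; apply/val_inj.
  by apply: (antitone_flip_uniq (query_anti (g j1)) (g_flip j1)); rewrite eq_g.
by have := leq_card _ g_inj; rewrite !card_ord.
Qed.

End AndQueries.

Section OneWay.

Variables (X Y : finType) (F : X -> Y -> bool).

Lemma oneway_ok_factor (T : finType) (h : X -> T) (G : T -> Y -> bool) c :
  (forall x y, F x y = G (h x) y) -> #|T| <= 2 ^ c -> oneway_ok F c.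
Proof.
move=> F_factor le_T.
have le_T' : #|T| <= #|{ffun 'I_c -> bool}|.
  by rewrite card_ffun card_bool card_ord.
pose enc t : {ffun 'I_c -> bool} := enum_val (widen_ord le_T' (enum_rank t)).
have enc_inj : injective enc.
  by move=> t1 t2 /enum_val_inj /(congr1 val) /= /val_inj /enum_rank_inj.
apply/existsP; exists [ffun x => enc (h x)]; apply/existsP.
exists [ffun msg => [ffun y =>
          if [pick t | enc t == msg] is Some t then G t y else false]].
apply/forallP => x; apply/forallP => y; rewrite !ffunE F_factor.
case: pickP => [t /eqP /enc_inj -> // | /(_ (h x))].
by rewrite eqxx.
Qed.

Lemma oneway_ok_distinct_rows (A : finType) (r : A -> X) c :
  (forall a1 a2, F (r a1) =1 F (r a2) -> a1 = a2) ->
  oneway_ok F c -> #|A| <= 2 ^ c.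
Proof.
move=> r_distinct /existsP[alice /existsP[bob /forallP protocol]].
have rowE x : F x =1 bob (alice x) by move=> y; apply/eqP/(forallP (protocol x)).
suff /leq_card : injective (alice \o r) by rewrite card_ffun card_bool card_ord.
by move=> a1 a2 /= eq_msg; apply: r_distinct => y; rewrite !rowE eq_msg.
Qed.

End OneWay.

Section OMB.

Variable n : nat.
Implicit Types x y : bits n.

Definition last_zero x : nat := \max_(i : 'I_n | ~~ x i) i.+1.

Definition zero_prefix (j : nat) : bits n := [ffun i : 'I_n => j <= i].

Lemma OMBE x : OMB x = odd (last_zero x).
Proof. by []. Qed.

Lemma last_zero_le x : last_zero x <= n.
Proof. by apply/bigmax_leqP => i _; apply: ltn_ord. Qed.

Lemma last_zero_andb x y :
  last_zero [ffun i => x i && y i] = maxn (last_zero x) (last_zero y).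
Proof.
apply/eqP; rewrite eqn_leq geq_max; apply/and3P; split.
- apply/bigmax_leqP => i; rewrite ffunE negb_and leq_max.
  by case/orP=> zi; rewrite (leq_bigmax_cond i zi) ?orbT.
- by apply/bigmax_leqP => i zi; apply: leq_bigmax_cond; rewrite ffunE negb_and zi.
- apply/bigmax_leqP => i zi; apply: leq_bigmax_cond.
  by rewrite ffunE negb_and zi orbT.
Qed.

Lemma last_zero_prefix j : j <= n -> last_zero (zero_prefix j) = j.
Proof.
move=> le_jn; apply/eqP; rewrite eqn_leq; apply/andP; split.
  by apply/bigmax_leqP => i; rewrite ffunE -ltnNge.
case: j le_jn => // j lt_jn.
by apply: (leq_bigmax_cond (Ordinal lt_jn)); rewrite ffunE /= ltnn.
Qed.

Lemma zero_prefix_andb j1 j2 :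
  [ffun i => zero_prefix j1 i && zero_prefix j2 i] = zero_prefix (maxn j1 j2).
Proof. by apply/ffunP => i; rewrite !ffunE geq_max. Qed.

Lemma OMB_zero_prefix j : j <= n -> OMB (zero_prefix j) = odd j.
Proof. by move=> le_jn; rewrite OMBE last_zero_prefix. Qed.

Lemma compAND_OMB_zero_prefix j1 j2 : j1 <= n -> j2 <= n ->
  compAND (@OMB n) (zero_prefix j1) (zero_prefix j2) = odd (maxn j1 j2).
Proof.
by move=> le1 le2; rewrite /compAND zero_prefix_andb OMB_zero_prefix // geq_max le1.
Qed.

Lemma naadt_ok_OMB_lb k : naadt_ok (@OMB n) k -> n <= k.
Proof.
apply: (naadt_ok_chain (c := zero_prefix)) => [j1 j2 i le12 | j lt_jn].
  by rewrite !ffunE; apply: leq_trans.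
by rewrite !OMB_zero_prefix ?(ltnW lt_jn) //=; case: (odd j).
Qed.

Lemma oneway_ok_compAND_OMB : oneway_ok (compAND (@OMB n)) (up_log 2 n.+1).
Proof.
apply: (@oneway_ok_factor _ _ _ _ (fun x => inord (last_zero x) : 'I_n.+1)
          (fun m y => odd (maxn m (last_zero y)))).
  by move=> x y; rewrite /compAND OMBE last_zero_andb inordK // ltnS last_zero_le.
by rewrite card_ord up_logP.
Qed.

Lemma compAND_OMB_rows_distinct (j1 j2 : 'I_n.+1) :
  compAND (@OMB n) (zero_prefix j1) =1 compAND (@OMB n) (zero_prefix j2) ->
  j1 = j2.
Proof.
wlog lt12 : j1 j2 / j1 < j2.
  move=> sym eq_rows; case: (ltngtP j1 j2) => [lt|lt|/val_inj //].
    exact: sym.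
  by apply/esym/sym.
case: j1 j2 lt12 => [a lt_an] [[|b] // lt_bn] /= lt_ab.
have [le_ab le_bn] : a <= b /\ b <= n by split; [exact: lt_ab | exact: ltnW lt_bn].
(* Bob's input 0^b 1^(n-b) separates the rows of 0^a 1^(n-a) and 0^(b+1) ... *)
move/(_ (zero_prefix b)); rewrite !compAND_OMB_zero_prefix //.
by rewrite (maxn_idPr le_ab) (maxn_idPl (leqnSn b)) /=; case: (odd b).
Qed.

Lemma oneway_ok_compAND_OMB_lb c :
  oneway_ok (compAND (@OMB n)) c -> n.+1 <= 2 ^ c.
Proof.
move/(oneway_ok_distinct_rows compAND_OMB_rows_distinct).
by rewrite card_ord.
Qed.

End OMB.

Theorem theorem4p1 (n : nat) (hn : 0 < n) :
  NAADT (@OMB n) = n /\ Dcc_oneway (compAND (@OMB n)) = up_log 2 n.+1.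
Proof.
split; apply: ex_minn_eq.
- exact: naadt_ok_singletons.
- exact: naadt_ok_OMB_lb.
- exact: oneway_ok_compAND_OMB.
- by move=> c /oneway_ok_compAND_OMB_lb; apply: up_log_min.
Qed.
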